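(* Let $v$ be a prime and let $\mathcal C$ be an a-proper $(v,w,w-1,\lambda_c)$-OOC. Then $\mathcal C$ contains a sequence whose set of positions of $1$s, $Q\subseteq\mathbb Z_v$, satisfies $\{rq+s:q\in Q\}=\{0,1,\dots,w-1\}$ for some $r\in\mathbb Z_v^*$ and $s\in\mathbb Z_v$; hence $\mathcal C$ is equivalent to an OOC containing a sequence with $w$ consecutive $1$s, where equivalence means: the sequences of one are obtained from those of the other by applying a common map $(x_t)\mapsto(x_{r't})$ with $r'\in\mathbb Z_v^*$ followed by a cyclic shift of each sequence individually.
   Context: $\mathbb Z_v^*=\{r\in\mathbb Z_v:\gcd(r,v)=1\}$. A $(v,w,\lambda_a,\lambda_c)$-OOC is a family $\mathcal C$ of binary sequences $X=(x_t)_{t=0}^{v-1}$ (indices mod $v$) of weight $w$ with $\sum_tx_tx_{t+\delta}\le\lambda_a$ for all $X\in\mathcal C$, $0<\delta<v$, and $\sum_tx_ty_{t+\delta}\le\lambda_c$ for all distinct $X,Y\in\mathcal C$, $0\le\delta<v$. It is a-proper if $\lambda_a$ equals some auto-correlation value $\sum_tx_tx_{t+\delta}$ ($X\in\mathcal C$, $0<\delta<v$). *)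

From HB Require Import structures.
From mathcomp Require Import all_boot all_order all_algebra.
Set Implicit Arguments. Unset Strict Implicit. Unset Printing Implicit Defensive.
Import GRing.Theory.

(* A binary sequence of length v, indices taken mod v (v >= 2 in use). *)
Definition binseq (v : nat) := {ffun 'Z_v -> bool}.

Definition weight v (X : binseq v) : nat := \sum_(t : 'Z_v) (X t : nat).

Definition autocorr v (X : binseq v) (d : 'Z_v) : nat :=
  \sum_(t : 'Z_v) ((X t : nat) * (X (t + d)%R : nat)).

Definition crosscorr v (X Y : binseq v) (d : 'Z_v) : nat :=
  \sum_(t : 'Z_v) ((X t : nat) * (Y (t + d)%R : nat)).

Definition is_OOC v (w la lc : nat) (C : {set binseq v}) : Prop :=
  [/\ (forall X, X \in C -> weight X = w),
      (forall X, X \in C -> forall d : 'Z_v, d != 0%R -> autocorr X d <= la) &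
      (forall X Y, X \in C -> Y \in C -> X != Y ->
         forall d : 'Z_v, crosscorr X Y d <= lc)].

Definition a_proper v (la : nat) (C : {set binseq v}) : Prop :=
  exists2 X, X \in C & exists2 d : 'Z_v, d != 0%R & autocorr X d = la.

Definition in_Zv_star v (r : 'Z_v) : bool := coprime (val r) v.

Definition ones_pos v (X : binseq v) : {set 'Z_v} := [set t | X t].

Definition mult_shift v (r s : 'Z_v) (X : binseq v) : binseq v :=
  [ffun t : 'Z_v => X (r * (t + s))%R].

Definition consecutive_ones v (w : nat) (X : binseq v) : Prop :=
  exists a : 'Z_v, forall t : 'Z_v, X t = (val (t - a)%R < w).

From mathcomp Require Import all_boot all_order all_algebra.
From mathcomp Require Import zify ring.
Import GRing.Theory.

Set Implicit Arguments.
Unset Strict Implicit.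
Unset Printing Implicit Defensive.

(* If the auto-correlation of X at d equals w - 1, the translation q |-> q + d
   maps all but one position e of Q = ones_pos X back into Q, so Q is the
   arithmetic progression e, e - d, ..., e - (w - 1) d.  Since v is prime, d is
   invertible and q |-> (e - q) / d sends Q onto {0, ..., w - 1}.  Applying the
   inverse affine map to every sequence of C (with a suitable shift) preserves
   all correlation bounds and turns X into a block of w consecutive ones. *)

Lemma card_prefix_ord (n m : nat) : m <= n -> #|[set t : 'I_n | t < m]| = m.
Proof.
move=> le_mn; rewrite cardsE -sum1_card -[in RHS](card_ord m) -sum1_card.
by rewrite (big_ord_widen n (fun _ => 1) le_mn).
Qed.

Lemma card_prefix_ord_le (n m : nat) : #|[set t : 'I_n | t < m]| <= m.
Proof.
have [le_mn | /ltnW le_nm] := leqP m n; first by rewrite card_prefix_ord.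
by rewrite (leq_trans (max_card _)) // card_ord.
Qed.

Lemma down_closed_ord_prefix (n : nat) (K : {set 'I_n}) :
  (forall k j : 'I_n, k \in K -> j <= k -> j \in K) ->
  K = [set t : 'I_n | t < #|K|].
Proof.
move=> downK; apply/eqP; rewrite eqEcard card_prefix_ord_le andbT.
apply/subsetP => k kK; rewrite inE ltnNge; apply/negP => le_Kk.
have : [set t : 'I_n | t < k.+1] \subset K.
  by apply/subsetP => j; rewrite inE; apply: downK.
move/subset_leq_card; rewrite card_prefix_ord ?ltn_ord //.
by move/leq_trans/(_ le_Kk); rewrite ltnn.
Qed.

Lemma card_escape_le1 (T : finType) (g : T -> T) (Q : {set T}) :
  #|[set t in Q | g t \in Q]| = #|Q| - 1 -> #|[set t in Q | g t \notin Q]| <= 1.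
Proof.
have := cardsID [set t | g t \in Q] Q.
have -> : Q :&: [set t | g t \in Q] = [set t in Q | g t \in Q].
  by apply/setP => t; rewrite !inE.
have -> : Q :\: [set t | g t \in Q] = [set t in Q | g t \notin Q].
  by apply/setP => t; rewrite !inE andbC.
lia.
Qed.

Section ZpProgression.
Variable p : nat.
Local Notation Z := 'Z_p.+2.

Lemma val_Zp_subr1 (k : Z) : k != 0%R -> val (k - 1)%R = (val k).-1.
Proof.
move=> k0; have k_gt0 : 0 < val k by rewrite lt0n.
rewrite -{1}(natr_Zp k) -[X in (_ - X)%R]/(1%:R)%R -natrB //.
rewrite /= (val_Zp_nat (p := p.+2)) // modn_small; first by rewrite subn1.
by have := ltn_ord k; rewrite /Zp_trunc /=; lia.
Qed.

Lemma pred_closed_Zp_prefix (K : {set Z}) :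
  (forall k, k \in K -> k != 0%R -> (k - 1)%R \in K) ->
  K = [set t : Z | val t < #|K|].
Proof.
move=> predK; apply: down_closed_ord_prefix => k j kK le_jk.
have [n def_k] : exists n, val k = val j + n by exists (k - j); rewrite subnKC.
elim: n k kK def_k {le_jk} => [|n IHn] k kK def_k.
  by rewrite (_ : j = k) //; apply: val_inj; rewrite /= def_k addn0.
have k0 : k != 0%R by apply/eqP => k0; move: def_k; rewrite k0 addnS.
by apply: IHn (predK k kK k0) _; rewrite val_Zp_subr1 // def_k addnS.
Qed.

(* (e - q) / d counts the steps from the exceptional endpoint e down to q. *)
Lemma progression_affine_prefix (Q : {set Z}) (d e : Z) :
  d \is a GRing.unit -> (forall q, q \in Q -> q != e -> (q + d)%R \in Q) ->
  [set (- d^-1 * q + e * d^-1)%R | q in Q] = [set t : Z | val t < #|Q|].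
Proof.
move=> d_unit closedQ; set f := fun q : Z => (- d^-1 * q + e * d^-1)%R.
have f_inj : injective f.
  by move=> x y /addIr; apply: mulrI; rewrite unitrN unitrV.
rewrite -[LHS]/(f @: Q) -(card_imset Q f_inj).
apply: pred_closed_Zp_prefix => _ /imsetP [q qQ ->] fq0.
have qe : q != e by apply: contraNneq fq0 => ->; rewrite /f mulNr mulrC addNr.
have -> : (f q - 1 = f (q + d))%R by rewrite /f mulrDr !mulNr mulVr //; ring.
by rewrite imset_f // closedQ.
Qed.

Lemma escape_le1_affine_prefix (Q : {set Z}) (d : Z) :
  d \is a GRing.unit -> #|[set q in Q | (q + d)%R \notin Q]| <= 1 ->
  exists2 r : Z, r \is a GRing.unit &
    exists s : Z, [set (r * q + s)%R | q in Q] = [set t : Z | val t < #|Q|].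
Proof.
move=> d_unit /card_le1_eqP escape1.
have [e closedQ] : exists e, forall q, q \in Q -> q != e -> (q + d)%R \in Q.
  have [escape0 | [e eE]] := set_0Vmem [set q in Q | (q + d)%R \notin Q].
    exists 0%R => q qQ _; apply: contraT => qdQ'.
    by rewrite -(in_set0 q) -escape0 inE qQ.
  exists e => q qQ; apply: contraNT => qdQ'.
  by rewrite (escape1 q e) // inE qQ.
exists (- d^-1)%R; first by rewrite unitrN unitrV.
by exists (e * d^-1)%R; apply: progression_affine_prefix.
Qed.

Lemma Zp_unit_prime (d : Z) : prime p.+2 -> d != 0%R -> d \is a GRing.unit.
Proof.
move=> p2_prime d0; rewrite -(natr_Zp d) unitZpE // prime_coprime //.
by rewrite gtnNdvd // lt0n.
Qed.

Lemma Zp_unit_star (r : Z) : r \is a GRing.unit -> in_Zv_star r.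
Proof. by rewrite /in_Zv_star coprime_sym -{1}(natr_Zp r) unitZpE. Qed.

End ZpProgression.

Section Correlations.
Variable v : nat.
Implicit Types (X Y : binseq v) (d : 'Z_v).

Lemma weight_card X : weight X = #|ones_pos X|.
Proof.
rewrite /weight -sum1_card [RHS]big_mkcond /=.
by apply: eq_bigr => t _; rewrite inE; case: (X t).
Qed.

Lemma autocorr_card X d :
  autocorr X d = #|[set t in ones_pos X | (t + d)%R \in ones_pos X]|.
Proof.
rewrite /autocorr -sum1_card [RHS]big_mkcond /=.
by apply: eq_bigr => t _; rewrite !inE; case: (X t); case: (X _).
Qed.

Variable r : 'Z_v.
Hypothesis r_unit : r \is a GRing.unit.

Let affine_inj (s : 'Z_v) : injective (fun t => r * (t + s))%R.
Proof. by move=> x y /(mulrI r_unit) /addIr. Qed.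

Lemma weight_mult_shift s X : weight (mult_shift r s X) = weight X.
Proof.
rewrite /weight [RHS](reindex_inj (@affine_inj s)).
by apply: eq_bigr => t _; rewrite ffunE.
Qed.

Lemma autocorr_mult_shift s X d :
  autocorr (mult_shift r s X) d = autocorr X (r * d)%R.
Proof.
rewrite /autocorr [RHS](reindex_inj (@affine_inj s)).
apply: eq_bigr => t _; rewrite !ffunE.
by rewrite (_ : r * (t + d + s) = r * (t + s) + r * d)%R //; ring.
Qed.

Lemma crosscorr_mult_shift s1 s2 X Y d :
  crosscorr (mult_shift r s1 X) (mult_shift r s2 Y) d
  = crosscorr X Y (r * (d + s2 - s1))%R.
Proof.
rewrite /crosscorr [RHS](reindex_inj (@affine_inj s1)).
apply: eq_bigr => t _; rewrite !ffunE.
by rewrite (_ : r * (t + d + s2) = r * (t + s1) + r * (d + s2 - s1))%R //; ring.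
Qed.

Lemma is_OOC_mult_shift (w la lc : nat) (C : {set binseq v}) (sh : binseq v -> 'Z_v) :
  is_OOC w la lc C -> is_OOC w la lc [set mult_shift r (sh X) X | X in C].
Proof.
move=> [weightC autoC crossC]; split.
- by move=> _ /imsetP [X XC ->]; rewrite weight_mult_shift weightC.
- move=> _ /imsetP [X XC ->] d d0; rewrite autocorr_mult_shift autoC //.
  by apply: contraNneq d0 => rd0; rewrite -(mulKr r_unit d) rd0 mulr0.
- move=> _ _ /imsetP [X XC ->] /imsetP [Y YC ->] neq d.
  by rewrite crosscorr_mult_shift crossC //; apply: contraNneq neq => ->.
Qed.

Lemma mult_shift_inv_affine X s t :
  mult_shift r^-1%R (- s)%R X t = (t \in [set (r * q + s)%R | q in ones_pos X]).
Proof.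
rewrite ffunE; set u := (r^-1 * (t - s))%R.
have def_t : t = (r * u + s)%R by rewrite /u mulVKr ?addrNK.
rewrite [in RHS]def_t (@mem_imset _ _ (fun q => r * q + s)%R) ?inE //.
by move=> x y /addIr /(mulrI r_unit).
Qed.

End Correlations.

Theorem corollary5p5 (v w lc : nat) (C : {set binseq v}) :
  prime v -> is_OOC w (w - 1) lc C -> a_proper (w - 1) C ->
  (exists2 X, X \in C &
     exists2 r : 'Z_v, in_Zv_star r &
       exists s : 'Z_v,
         [set (r * q + s)%R | q in ones_pos X] = [set t : 'Z_v | val t < w])
  /\
  (exists2 r' : 'Z_v, in_Zv_star r' &
     exists sh : binseq v -> 'Z_v,
       let C' := [set mult_shift r' (sh X) X | X in C] in
       is_OOC w (w - 1) lc C' /\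
       exists2 Y, Y \in C' & consecutive_ones w Y).
Proof.
move=> v_prime OOC_C [X XC [d d0 autoXd]].
have [p def_v] : exists p, v = p.+2 by exists v.-2; have := prime_gt1 v_prime; lia.
subst v; have [weightC _ _] := OOC_C.
have card_Q : #|ones_pos X| = w by rewrite -weight_card weightC.
have [r r_unit [s image_Q]] : exists2 r : 'Z_p.+2, r \is a GRing.unit &
    exists s, [set (r * q + s)%R | q in ones_pos X] = [set t | val t < w].
  rewrite -card_Q; apply: escape_le1_affine_prefix (Zp_unit_prime v_prime d0) _.
  by apply: card_escape_le1; rewrite card_Q -autocorr_card.
split; first by exists X => //; exists r; [exact: Zp_unit_star | exists s].
exists r^-1%R; first by rewrite Zp_unit_star ?unitrV.
exists (fun=> - s)%R; split; first by apply: is_OOC_mult_shift; rewrite ?unitrV.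
exists (mult_shift r^-1 (- s) X)%R; first exact: imset_f.
by exists 0%R => t; rewrite subr0 mult_shift_inv_affine // image_Q inE.
Qed.
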